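(* Let $d\in\mathbb{N}$ and let $f\in\mathbb{R}[x]$ be a univariate polynomial of degree at most $d$ that is positive on $[-1,1]$, with minimum and maximum values $0<f_{\min}<f_{\max}$ on $[-1,1]$. Let $r\in\mathbb{N}$, $r\ge2$, satisfy \[ \frac{r}{\log r}\ge 10\sqrt{35}\left(1+\tfrac{1}{\sqrt2}\right)d^{5/2}\quad\text{and}\quad \frac{r}{\log r}\ge 150\,d^{5/2}\frac{f_{\max}}{f_{\min}}. \] Then $f+\epsilon\in\mathcal Q(1-x^2)_{2t}$, where $t=O(r)$ and $\epsilon=O(\|f\|_{1,\mathrm{cheb}}\log(r)/r^2)$. In particular, one may take \[ t=104r,\qquad \epsilon=\left(\tfrac72 d^{9/2}+14\right)\|f\|_{1,\mathrm{cheb}}\,\frac{\log r}{r^2}. \]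
   Context: $\Sigma[x]_r$ is the cone of sums of squares of univariate polynomials of degree at most $r$, and $\mathcal Q(1-x^2)_r=\Sigma[x]_r+(1-x^2)\Sigma[x]_{r-2}$. $T_k(x)=\cos(k\arccos x)$ is the Chebyshev polynomial of the first kind; for $p=\sum_k c_kT_k$, $\|p\|_{1,\mathrm{cheb}}=\sum_k|c_k|$. $\log$ is the natural logarithm. *)

From HB Require Import structures.
From mathcomp Require Import all_boot all_order all_algebra.
From mathcomp Require Import reals exp.
Set Implicit Arguments. Unset Strict Implicit. Unset Printing Implicit Defensive.
Import Order.TTheory GRing.Theory Num.Theory.
Local Open Scope ring_scope.

(* Chebyshev polynomials of the first kind:
   T_0 = 1, T_1 = X, T_{k+2} = 2 X T_{k+1} - T_k  (so that T_k(cos t) = cos(k t)). *)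
Fixpoint chebT_pair (R : comNzRingType) (k : nat) : {poly R} * {poly R} :=
  match k with
  | 0%N => (1, 'X)
  | k'.+1 => let: (a, b) := chebT_pair R k' in (b, 2%:R *: 'X * b - a)
  end.
Definition chebT (R : comNzRingType) (k : nat) : {poly R} := (chebT_pair R k).1.

(* Sigma[x]_r : sums of squares of polynomials, of total degree at most r
   (each square p^2 has degree 2 deg p <= r). *)
Definition sos_deg (R : comNzRingType) (r : nat) (s : {poly R}) : Prop :=
  exists ps : seq {poly R},
    s = \sum_(p <- ps) p ^+ 2 /\ all (fun p : {poly R} => ((size p).-1 * 2 <= r)%N) ps.

Definition quadmod_deg (R : comNzRingType) (r : nat) (q : {poly R}) : Prop :=
  exists s0 s1 : {poly R},
    sos_deg r s0 /\ sos_deg (r - 2) s1 /\ q = s0 + (1 - 'X ^+ 2) * s1.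

(* Over a real closed field, a polynomial of degree k that is positive on
   [-1, 1] factors into linear factors x - a, a - x with |a| > 1 and
   quadratics (x - a)^2 + b^2, up to a positive constant.  Each factor lies in
   Q(1 - x^2)_2, and Q(1 - x^2) is closed under products with additive degree
   bounds, so the polynomial lies in Q(1 - x^2)_{2k+2}.  Since the shift eps is
   nonnegative, f + eps is such a polynomial of degree at most d, and the
   second hypothesis on r / log r forces 75 d <= r, whence 2d + 2 <= 2 (104 r). *)

From HB Require Import structures.
From mathcomp Require Import all_boot all_order all_algebra.
From mathcomp Require Import reals exp complex zify ring lra.
Set Implicit Arguments.
Unset Strict Implicit.
Unset Printing Implicit Defensive.

Import Order.TTheory GRing.Theory Num.Theory.
Local Open Scope ring_scope.

Section SumsOfSquares.
Variable R : comNzRingType.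
Implicit Types (p s t : {poly R}) (n m : nat).

Lemma sos_deg_mono n m s : (n <= m)%N -> sos_deg n s -> sos_deg m s.
Proof.
move=> le_nm [ps [-> /allP ps_deg]]; exists ps; split=> //.
by apply/allP=> p /ps_deg /leq_trans; apply.
Qed.

Lemma sos_deg0 n : sos_deg n (0 : {poly R}).
Proof. by exists [::]; rewrite big_nil. Qed.

Lemma sos_degD n s t : sos_deg n s -> sos_deg n t -> sos_deg n (s + t).
Proof.
move=> [ps [-> ps_deg]] [qs [-> qs_deg]]; exists (ps ++ qs).
by rewrite big_cat all_cat ps_deg qs_deg.
Qed.

Lemma sos_deg_sqr n p : ((size p).-1 * 2 <= n)%N -> sos_deg n (p ^+ 2).
Proof. by move=> p_deg; exists [:: p]; rewrite big_seq1 /= p_deg. Qed.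

Lemma sos_degM n m s t : sos_deg n s -> sos_deg m t -> sos_deg (n + m) (s * t).
Proof.
move=> [ps [-> /allP ps_deg]] [qs [-> /allP qs_deg]].
exists [seq p * q | p <- ps, q <- qs]; split.
  rewrite big_allpairs_dep mulr_suml; apply: eq_bigr => p _.
  by rewrite mulr_sumr; apply: eq_bigr => q _; rewrite exprMn.
apply/allP => _ /allpairsP [[p q] [/= /ps_deg p_deg /qs_deg q_deg ->]].
have := size_polyMleq p q; move: (size (p * q)) (size p) (size q) p_deg q_deg.
lia.
Qed.

Lemma quadmod_deg_mono n m s : (n <= m)%N -> quadmod_deg n s -> quadmod_deg m s.
Proof.
move=> le_nm [s0 [s1 [s0_deg [s1_deg ->]]]]; exists s0, s1; split.
  exact: sos_deg_mono s0_deg.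
by split=> //; apply: sos_deg_mono s1_deg; apply: leq_sub2r.
Qed.

Lemma quadmod_deg_sos n s : sos_deg n s -> quadmod_deg n s.
Proof.
by move=> s_deg; exists s, 0; rewrite mulr0 addr0; do !split=> //; apply: sos_deg0.
Qed.

Lemma quadmod_degD n s t : quadmod_deg n s -> quadmod_deg n t -> quadmod_deg n (s + t).
Proof.
move=> [s0 [s1 [s0_deg [s1_deg ->]]]] [t0 [t1 [t0_deg [t1_deg ->]]]].
exists (s0 + t0), (s1 + t1); split; first exact: sos_degD.
by split; [exact: sos_degD | ring].
Qed.

Lemma size_1subX2 : size (1 - 'X ^+ 2 : {poly R}) = 3.
Proof. by rewrite addrC size_polyDl size_polyN size_polyXn // size_poly1. Qed.

Lemma quadmod_degM n m s t : (2 <= n)%N -> (2 <= m)%N ->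
  quadmod_deg n s -> quadmod_deg m t -> quadmod_deg (n + m) (s * t).
Proof.
move=> n_ge2 m_ge2 [s0 [s1 [s0_deg [s1_deg ->]]]] [t0 [t1 [t0_deg [t1_deg ->]]]].
exists (s0 * t0 + (1 - 'X ^+ 2) ^+ 2 * (s1 * t1)), (s0 * t1 + s1 * t0).
split; last split; last by ring.
- apply: sos_degD; first exact: sos_degM.
  rewrite (_ : n + m = 4 + ((n - 2) + (m - 2)))%N; last by lia.
  by apply: sos_degM; [apply: sos_deg_sqr; rewrite size_1subX2 | exact: sos_degM].
- apply: sos_degD.
  + by rewrite (_ : n + m - 2 = n + (m - 2))%N; [exact: sos_degM | lia].
  + by rewrite (_ : n + m - 2 = (n - 2) + m)%N; [exact: sos_degM | lia].
Qed.

End SumsOfSquares.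

Section RealFactorization.
Variable R : rcfType.
Implicit Types g : {poly R}.
Local Open Scope complex_scope.
Local Notation C := (real_complex R).

Lemma map_real_complex_quadratic (a b : R) :
  map_poly C (('X - a%:P) ^+ 2 + (b ^+ 2)%:P) =
  ('X - (a +i* b)%:P) * ('X - (a -i* b)%:P).
Proof.
have zE : a +i* b = a%:C + 'i * b%:C by simpc.
have zJE : a -i* b = a%:C - 'i * b%:C by simpc.
have bE : ((b ^+ 2)%:C)%:P = (b%:C)%:P ^+ 2 :> {poly R[i]}.
  by rewrite -polyC_exp -(rmorphXn C).
have I2 : 'i%:P ^+ 2 = -1 :> {poly R[i]} by rewrite -rmorphXn sqr_i rmorphN1.
rewrite zJE zE rmorphD rmorphXn rmorphB /= map_polyX !map_polyC /=.
rewrite bE polyCB polyCD !polyCM.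
transitivity (('X - (a%:C)%:P) ^+ 2 - 'i%:P ^+ 2 * (b%:C)%:P ^+ 2).
  by rewrite I2; ring.
ring.
Qed.

Lemma real_root_or_quadratic_factor g : size g != 1 ->
  (exists a, root g a) \/
  (exists a b, b != 0 /\ ('X - a%:P) ^+ 2 + (b ^+ 2)%:P %| g).
Proof.
move=> g_nconst.
have [[a b] gz] : exists z, root (map_poly C g) z.
  by apply/closed_rootP; rewrite size_map_poly.
have [b0 | b_neq0] := eqVneq b 0.
  by left; exists a; rewrite -(fmorph_root C); rewrite b0 in gz.
right; exists a, b; split=> //.
have gz' : root (map_poly C g) (a -i* b).
  rewrite -[a -i* b]/((a +i* b)^*) -complex_root_conj -map_poly_comp.
  rewrite (eq_map_poly (g := C)) //.
  by move=> x /=; rewrite oppr0.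
rewrite -(dvdp_map C) map_real_complex_quadratic.
have := @uniq_roots_dvdp _ (map_poly C g) [:: a +i* b; a -i* b].
rewrite big_cons big_seq1; apply; first by rewrite /= gz gz'.
rewrite uniq_rootsE /= inE andbT eq_complex /= negb_and eqxx /=.
by rewrite -subr_eq0 opprK -mulr2n mulrn_eq0.
Qed.

End RealFactorization.

Section IntervalPositivity.
Variable R : rcfType.
Implicit Types (g h p : {poly R}).

Lemma sos_deg_polyC n (c : R) : 0 <= c -> sos_deg n c%:P.
Proof.
move=> c_ge0; rewrite -[c]sqr_sqrtr // rmorphXn /=; apply: sos_deg_sqr.
by rewrite size_polyC; case: (_ != 0).
Qed.

Lemma quadmod_deg_polyC n (c : R) : 0 <= c -> quadmod_deg n c%:P.
Proof. by move=> c_ge0; apply/quadmod_deg_sos/sos_deg_polyC. Qed.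

(* For e = 1 or -1: 1 + e x = ((1 + e x)^2 + (1 - x^2)) / 2. *)
Lemma quadmod_deg2_1DX (e : R) : e ^+ 2 = 1 -> quadmod_deg 2 (1 + e *: 'X).
Proof.
move=> e2; pose w := Num.sqrt (2^-1 : R).
have w2 : w ^+ 2 = 2^-1 by rewrite sqr_sqrtr // invr_ge0 ler0n.
exists ((w *: (1 + e *: 'X)) ^+ 2), (w ^+ 2)%:P; split; last split.
- apply: sos_deg_sqr; set u := 1 + e *: 'X.
  have u_size : (size u <= 2)%N.
    rewrite /u addrC -mul_polyC -[1]polyC1 size_MXaddC.
    by case: ifP => // _; move: (size_polyC_leq1 e); case: size => [|[]].
  move: (size_scale_leq w u) u_size; move: (size (w *: u)) (size u); lia.
- exact/sos_deg_polyC/sqr_ge0.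
- have E2 : e%:P ^+ 2 = 1 :> {poly R} by rewrite -rmorphXn e2.
  have H2 : (2^-1)%:P * 2%:R = 1 :> {poly R}.
    by rewrite -polyC_natr -polyCM mulVf ?pnatr_eq0.
  rewrite exprZn w2 -!mul_polyC.
  transitivity ((2^-1)%:P * 2%:R * (1 + e%:P * 'X)
                + (2^-1)%:P * (e%:P ^+ 2 - 1) * 'X ^+ 2 : {poly R}).
    by rewrite H2 E2; ring.
  ring.
Qed.

Lemma quadmod_deg2_XsubC (a : R) : a <= -1 -> quadmod_deg 2 ('X - a%:P).
Proof.
move=> a_le; rewrite (_ : _ - _ = (- a - 1)%:P + (1 + 1 *: 'X)); last first.
  by rewrite polyCB polyCN polyC1 scale1r; ring.
apply: quadmod_degD; last exact: quadmod_deg2_1DX (expr1n _ _).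
by apply: quadmod_deg_polyC; rewrite subr_ge0 lerNr.
Qed.

Lemma quadmod_deg2_CsubX (a : R) : 1 <= a -> quadmod_deg 2 (a%:P - 'X).
Proof.
move=> a_ge; rewrite (_ : _ - _ = (a - 1)%:P + (1 + (-1) *: 'X)); last first.
  by rewrite polyCB polyC1 scaleN1r; ring.
apply: quadmod_degD; last by apply: quadmod_deg2_1DX; rewrite sqrrN expr1n.
by apply: quadmod_deg_polyC; rewrite subr_ge0.
Qed.

Definition pos_on_interval p := forall x : R, -1 <= x <= 1 -> 0 < p.[x].

Lemma pos_on_interval_divl p h :
  pos_on_interval p -> pos_on_interval (p * h) -> pos_on_interval h.
Proof.
by move=> p_pos ph_pos x x_in; move: (ph_pos x x_in); rewrite hornerM pmulr_rgt0 ?p_pos.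
Qed.

Lemma quadmod2_divisor_of_pos g : size g != 1 -> pos_on_interval g ->
  exists p, [/\ (1 < size p)%N, p %| g, pos_on_interval p & quadmod_deg 2 p].
Proof.
move=> g_nconst g_pos.
have [[a ga] | [a [b [b_neq0 qg]]]] := real_root_or_quadratic_factor g_nconst.
- have a_out : (a < -1) || (1 < a).
    rewrite ltNge [1 < a]ltNge -negb_and; apply: contraTN ga => a_in.
    by rewrite /root gt_eqF ?g_pos.
  have [a_lt|a_ge] := ltP a (-1).
  + exists ('X - a%:P); split; rewrite ?size_XsubC ?dvdp_XsubCl //.
      by move=> x /andP[x_ge _]; rewrite hornerXsubC subr_gt0 (lt_le_trans a_lt).
    exact/quadmod_deg2_XsubC/ltW.
  + have a_gt : 1 < a by move: a_out; rewrite ltNge a_ge.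
    exists (a%:P - 'X); rewrite -opprB dvdpNl size_polyN size_XsubC dvdp_XsubCl opprB.
    split=> //; last exact/quadmod_deg2_CsubX/ltW.
    by move=> x /andP[_ x_le]; rewrite !hornerE subr_gt0 (le_lt_trans x_le).
- exists (('X - a%:P) ^+ 2 + (b ^+ 2)%:P); split=> //.
  + rewrite size_polyDl size_exp_XsubC // (leq_ltn_trans (size_polyC_leq1 _)) //.
  + by move=> x _; rewrite !hornerE ltr_wpDl ?sqr_ge0 ?exprn_even_gt0.
  + apply/quadmod_deg_sos/sos_degD; last exact/sos_deg_polyC/sqr_ge0.
    by apply: sos_deg_sqr; rewrite size_XsubC.
Qed.

Lemma quadmod_deg_pos_on_interval k g : (size g <= k.+1)%N -> pos_on_interval g ->
  quadmod_deg (2 * k + 2) g.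
Proof.
elim: k g => [|k IH] g g_size g_pos.
  rewrite (size1_polyC g_size); apply/quadmod_deg_polyC/ltW.
  by rewrite -horner_coef0 g_pos // oppr_le0 ler01.
have [g_small | g_big] := leqP (size g) k.+1.
  by apply: quadmod_deg_mono (IH g g_small g_pos); lia.
have [|p [p_big pg p_pos p_quad]] := quadmod2_divisor_of_pos _ g_pos.
  by rewrite gtn_eqF // (leq_ltn_trans _ g_big).
have p_neq0 : p != 0 by rewrite -size_poly_eq0 -lt0n ltnW.
have gE : g = p * (g %/ p) by rewrite mulrC divpK.
rewrite gE (_ : 2 * k.+1 + 2 = 2 + (2 * k + 2))%N; last by lia.
apply: quadmod_degM => //; first by lia.
apply: IH; last by apply: pos_on_interval_divl p_pos _; rewrite -gE.
by rewrite size_divp //; move: (size g) (size p) g_size p_big; lia.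
Qed.

End IntervalPositivity.

Lemma natr_le_sqr_mul_sqrt (R : rcfType) n : n%:R <= n%:R ^+ 2 * Num.sqrt n%:R :> R.
Proof.
case: n => [|n]; first by rewrite mulr0n expr0n mul0r.
have n_ge1 : 1 <= n.+1%:R :> R by rewrite ler1n.
have sqrt_ge1 : 1 <= Num.sqrt n.+1%:R :> R by rewrite -{1}sqrtr1 ler_wsqrtr.
by rewrite expr2 -mulrA ler_peMr ?ler0n // mulr_ege1.
Qed.

Section Logarithm.
Variable R : realType.

Lemma ln_ge_half (x : R) : 2 <= x -> 2^-1 <= ln x.
Proof.
move=> x_ge2; have ln2_ge : 2^-1 <= ln (2 : R).
  have := expR_ge1Dx (- ln (2 : R)); rewrite expRN lnK ?posrE //.
  by rewrite (_ : 2^-1 = 1 - 2^-1 :> R); [lra | field].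
by apply: le_trans ln2_ge _; rewrite ler_ln ?posrE // (lt_le_trans _ x_ge2).
Qed.

Lemma div_ln_le_double (x : R) : 2 <= x -> x / ln x <= 2 * x.
Proof.
move=> x_ge2; have ln_ge := ln_ge_half x_ge2.
rewrite ler_pdivrMr ?(lt_le_trans _ ln_ge) ?invr_gt0 //.
have : 0 <= x by apply: le_trans x_ge2.
nra.
Qed.

End Logarithm.

Theorem theorem6 (R : realType) (d : nat) (f : {poly R}) (fmin fmax : R)
  (c : seq R) (r : nat) :
  (size f <= d.+1)%N ->
  (forall x : R, -1 <= x <= 1 -> 0 < f.[x]) ->
  (forall x : R, -1 <= x <= 1 -> fmin <= f.[x] <= fmax) ->
  (exists2 x : R, -1 <= x <= 1 & f.[x] = fmin) ->
  (exists2 x : R, -1 <= x <= 1 & f.[x] = fmax) ->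
  0 < fmin < fmax ->
  (* c is the Chebyshev coefficient sequence of f, so ||f||_{1,cheb} = sum |c_k| *)
  f = \sum_(k < size c) c`_k *: chebT R k ->
  (2 <= r)%N ->
  10 * Num.sqrt 35 * (1 + 1 / Num.sqrt 2) * (d%:R ^+ 2 * Num.sqrt d%:R)
    <= r%:R / ln (r%:R : R) ->
  150 * (d%:R ^+ 2 * Num.sqrt d%:R) * (fmax / fmin) <= r%:R / ln (r%:R : R) ->
  quadmod_deg (2 * (104 * r))
    (f + ((7 / 2 * (d%:R ^+ 4 * Num.sqrt d%:R) + 14)
           * (\sum_(k < size c) `|c`_k|) * ln (r%:R : R) / r%:R ^+ 2)%:P).
Proof.
move=> f_size f_pos _ _ _ /andP[fmin_gt0 fmin_lt_fmax] _ r_ge2 _ r_bound.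
set eps := (X in f + X%:P).
have r_ge2R : 2 <= r%:R :> R by rewrite ler_nat.
have eps_ge0 : 0 <= eps.
  have ln_r_ge0 : 0 <= ln (r%:R : R) by rewrite ln_ge0 // ler1n (leq_trans _ r_ge2).
  by rewrite /eps !(divr_ge0, mulr_ge0, addr_ge0, sumr_ge0, exprn_ge0, sqrtr_ge0, ler0n).
have d_le : (75 * d <= r)%N.
  rewrite -(ler_nat R) natrM.
  have := div_ln_le_double r_ge2R; have := natr_le_sqr_mul_sqrt R d.
  have : 1 <= fmax / fmin by rewrite ler_pdivlMr // mul1r ltW.
  have : 0 <= d%:R :> R by rewrite ler0n.
  nra.
apply: quadmod_deg_mono (quadmod_deg_pos_on_interval (k := d) _ _); first by lia.
  by rewrite (leq_trans (size_polyD _ _)) // geq_max f_size (leq_trans (size_polyC_leq1 _)).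
by move=> x x_in; rewrite hornerD hornerC ltr_wpDr ?f_pos.
Qed.
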